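(* If $(G,\sigma)$ is a signed graph and $S$ is an $s$-redundant set of $(G,\sigma)$, then $\chi_s(G,\sigma)\le |S|+\chi_s((G,\sigma)-S)$, where $(G,\sigma)-S$ is the signed graph induced on $V(G)\setminus S$.
   Context: A signed graph $(G,\sigma)$ is a simple loopless undirected graph with a signature $\sigma:E(G)\to\{+1,-1\}$. Switching a vertex negates the signs of its incident edges; two signatures are equivalent if one is obtained from the other by switching a set of vertices. A homomorphism of $(G,\sigma)$ to $(H,\pi)$ is a graph homomorphism $\varphi:G\to H$ for which there is a signature $\sigma'$ equivalent to $\sigma$ with $\pi(\varphi(u)\varphi(v))=\sigma'(uv)$ for every edge $uv$; $\chi_s(G,\sigma)$ is the smallest order of a signed graph to which $(G,\sigma)$ admits a homomorphism. A path is unbalanced if the product of its edge signs is $-1$; $UP_3$ denotes an unbalanced path on $3$ vertices. A set $S\subseteq V(G)$ is $s$-redundant if for all $x,y\in V(G)\setminus S$ with $xy\notin E(G)$, every $z\in S$ and every signature $\sigma'$ equivalent to $\sigma$: if $xzy$ is a $UP_3$ in $(G,\sigma')$, then there exists $w\in V(G)\setminus S$ such that $xwy$ is a $UP_3$ in $(G,\sigma')$. *)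

From mathcomp Require Import all_boot.
From mathcomp Require Import boolp.

Set Implicit Arguments.
Unset Strict Implicit.
Unset Printing Implicit Defensive.

(* A signed graph on the finite vertex type T is given by an adjacency
   relation [e] (simple, loopless, undirected: symmetric and irreflexive)
   and a signature [sg] : T -> T -> bool, where [sg u v = true] means the
   edge uv has sign -1 and [false] means sign +1.  [sg] is symmetric; its
   values on non-edges are irrelevant. *)
Definition signed_graph (T : finType) (e : rel T) (sg : T -> T -> bool) :=
  [/\ symmetric e, irreflexive e & forall u v, sg u v = sg v u].

(* Switching the vertices of X: negates the signs of edges with exactly one
   end in X (an edge with both ends in X is negated twice). *)
Definition switch (T : finType) (sg : T -> T -> bool) (X : {set T}) :=
  fun u v => sg u v (+) (u \in X) (+) (v \in X).

Definition signed_hom (T U : finType) (e : rel T) (sg : T -> T -> bool)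
  (f : rel U) (pi : U -> U -> bool) (phi : T -> U) :=
  (forall u v, e u v -> f (phi u) (phi v)) /\
  exists X : {set T}, forall u v, e u v -> pi (phi u) (phi v) = switch sg X u v.

(* (G,sg) admits a homomorphism to some signed graph of order k
   (any finite signed graph of order k is isomorphic to one on 'I_k). *)
Definition hom_to_order (T : finType) (e : rel T) (sg : T -> T -> bool)
  (k : nat) : Prop :=
  exists (f : rel 'I_k) (pi : 'I_k -> 'I_k -> bool) (phi : T -> 'I_k),
    signed_graph f pi /\ signed_hom e sg f pi phi.

Lemma hom_to_order_exists (T : finType) (e : rel T) (sg : T -> T -> bool) :
  signed_graph e sg -> exists k, `[< hom_to_order e sg k >].
Proof.
case=> esym eirr sgsym; exists #|T|; apply/asboolP.
exists (fun i j => e (enum_val i) (enum_val j)).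
exists (fun i j => sg (enum_val i) (enum_val j)).
exists enum_rank; split.
  split.
  - by move=> i j /=; rewrite esym.
  - by move=> i /=; rewrite eirr.
  - by move=> i j; rewrite sgsym.
split; first by move=> u v /=; rewrite !enum_rankK.
exists set0 => u v _; by rewrite /switch !enum_rankK !inE !addbF.
Qed.

(* The signed chromatic number chi_s(G,sg) (for a signed graph): smallest
   order of a signed graph to which (G,sg) admits a homomorphism.
   For non-signed-graph input it is (irrelevantly) 0. *)
Definition chi_s (T : finType) (e : rel T) (sg : T -> T -> bool) : nat :=
  match pselect (signed_graph e sg) with
  | left H => ex_minn (hom_to_order_exists H)
  | right _ => 0
  end.

Definition UP3 (T : finType) (e : rel T) (sg' : T -> T -> bool) (x z y : T) :=
  [/\ x != y, e x z, e z y & sg' x z (+) sg' z y].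

Definition s_redundant (T : finType) (e : rel T) (sg : T -> T -> bool)
  (S : {set T}) :=
  forall x y, x \notin S -> y \notin S -> ~~ e x y ->
  forall z, z \in S -> forall X : {set T},
    UP3 e (switch sg X) x z y ->
    exists2 w, w \notin S & UP3 e (switch sg X) x w y.

Definition del_type (T : finType) (S : {set T}) := {x : T | x \notin S}.
Definition del_rel (T : finType) (S : {set T}) (e : rel T) : rel (del_type S) :=
  fun x y => e (val x) (val y).
Definition del_sig (T : finType) (S : {set T}) (sg : T -> T -> bool) :
  del_type S -> del_type S -> bool :=
  fun x y => sg (val x) (val y).
Arguments del_rel {T} S e _ _.
Arguments del_sig {T} S sg _ _.

From mathcomp Require Import all_boot.
From mathcomp Require Import boolp.

Set Implicit Arguments.
Unset Strict Implicit.
Unset Printing Implicit Defensive.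

(* Keep the vertices of S and replace V(G) \ S by its image under an optimal
   homomorphism phi of (G,sg) - S, switched at X'.  A vertex a of S is joined
   to an image vertex i when some neighbour d of a has phi d = i, and the edge
   gets the sign of ad after switching at X'.  s-redundancy makes this sign
   independent of d: two such neighbours d, d' are non-adjacent (their common
   image carries no loop), and if ad, ad' had different signs then d a d'
   would be a UP_3, hence so would d w d' for some w outside S; but the edges
   dw and d'w are both mapped onto the edge (phi d)(phi w), so they have the
   same sign. *)

Lemma chi_s_le (T : finType) (e : rel T) (sg : T -> T -> bool) n :
  signed_graph e sg -> hom_to_order e sg n -> chi_s e sg <= n.
Proof.
move=> Gsg hom_n; rewrite /chi_s; case: pselect => // Gsg'.
by case: ex_minnP => m _; apply; apply/asboolP.
Qed.

Lemma chi_sP (T : finType) (e : rel T) (sg : T -> T -> bool) :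
  signed_graph e sg -> hom_to_order e sg (chi_s e sg).
Proof.
move=> Gsg; rewrite /chi_s; case: pselect => // Gsg'.
by case: ex_minnP => m /asboolP.
Qed.

Lemma hom_to_order_card (T V : finType) (e : rel T) (sg : T -> T -> bool)
    (f : rel V) (pi : V -> V -> bool) (phi : T -> V) :
  signed_graph f pi -> signed_hom e sg f pi phi -> hom_to_order e sg #|V|.
Proof.
case=> fsym firr pisym [hom_f [X hom_pi]].
exists (fun i j => f (enum_val i) (enum_val j)).
exists (fun i j => pi (enum_val i) (enum_val j)).
exists (enum_rank \o phi); split.
  by split=> [i j | i | i j] /=; rewrite (fsym, firr, pisym).
split=> [u v euv | ]; first by rewrite /= !enum_rankK hom_f.
by exists X => u v euv; rewrite /= !enum_rankK hom_pi.
Qed.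

Lemma switchC (T : finType) (sg : T -> T -> bool) (X : {set T}) :
  (forall u v, sg u v = sg v u) -> forall u v, switch sg X u v = switch sg X v u.
Proof. by move=> sgC u v; rewrite /switch sgC addbAC. Qed.

Lemma signed_graph_del (T : finType) (e : rel T) (sg : T -> T -> bool)
    (S : {set T}) :
  signed_graph e sg -> signed_graph (del_rel S e) (del_sig S sg).
Proof.
by case=> esym eirr sgC; split=> [x y | x | x y]; rewrite /del_rel /del_sig
  (esym, eirr, sgC).
Qed.

Lemma switch_del (T : finType) (S : {set T}) (sg : T -> T -> bool)
    (X : {set del_type S}) (u v : del_type S) :
  switch (del_sig S sg) X u v = switch sg (val @: X) (val u) (val v).
Proof. by rewrite /switch /del_sig !mem_imset //; apply: val_inj. Qed.

Section ExtendHomomorphism.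

Variables (T : finType) (e : rel T) (sg : T -> T -> bool) (S : {set T}).
Hypothesis Gsg : signed_graph e sg.
Hypothesis S_red : s_redundant e sg S.

Variables (V : finType) (f : rel V) (pi : V -> V -> bool).
Variables (phi : del_type S -> V) (X' : {set del_type S}).
Hypothesis Hpi : signed_graph f pi.
Hypothesis phi_edge : forall u v, del_rel S e u v -> f (phi u) (phi v).
Hypothesis phi_sign : forall u v, del_rel S e u v ->
  pi (phi u) (phi v) = switch (del_sig S sg) X' u v.

Local Notation Sv := {x : T | x \in S}.
Local Notation X := (val @: X').
Local Notation sgX := (switch sg X).

Definition mapped_nbr (a : Sv) (i : V) (d : del_type S) :=
  e (val a) (val d) && (phi d == i).

Definition ext_vertex := (Sv + V)%type.

Definition mixed_rel (a : Sv) (i : V) := [exists d, mapped_nbr a i d].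

Definition mixed_sig (a : Sv) (i : V) :=
  [exists d, mapped_nbr a i d && sgX (val a) (val d)].

Definition ext_rel (p q : ext_vertex) : bool :=
  match p, q with
  | inl a, inl b => e (val a) (val b)
  | inr i, inr j => f i j
  | inl a, inr i | inr i, inl a => mixed_rel a i
  end.

Definition ext_sig (p q : ext_vertex) : bool :=
  match p, q with
  | inl a, inl b => sgX (val a) (val b)
  | inr i, inr j => pi i j
  | inl a, inr i | inr i, inl a => mixed_sig a i
  end.

Definition ext_map (v : T) : ext_vertex :=
  match @idP (v \in S) with
  | ReflectT vS => inl (exist _ v vS)
  | ReflectF vNS => inr (phi (exist _ v (introT negP vNS)))
  end.

Variant ext_map_spec (v : T) : ext_vertex -> Type :=
  | ExtMapIn (a : Sv) of v = val a : ext_map_spec v (inl a)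
  | ExtMapOut (d : del_type S) of v = val d : ext_map_spec v (inr (phi d)).

Lemma ext_mapP (v : T) : ext_map_spec v (ext_map v).
Proof. by rewrite /ext_map; case: {-}_ / idP => vS; constructor. Qed.

Lemma neighbour_sign_eq (a : Sv) (d d' : del_type S) :
  e (val a) (val d) -> e (val a) (val d') -> phi d = phi d' ->
  sgX (val a) (val d) = sgX (val a) (val d').
Proof.
case: Gsg => esym eirr sgC; case: Hpi => _ firr _.
move=> ead ead' phi_dd'; have [-> // | neq_dd'] := eqVneq d d'.
have nadj : ~~ e (val d) (val d').
  by apply/negP => /(@phi_edge d d'); rewrite phi_dd' firr.
apply/eqP; apply: contraT => sign_neq.
have up3 : UP3 e sgX (val d) (val a) (val d').
  split=> //; first by rewrite esym.
  by rewrite (switchC X sgC) -negb_eqb.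
have [w wNS [_ edw ewd' unbal]] := S_red (valP d) (valP d') nadj (valP a) up3.
pose dw : del_type S := exist _ w wNS.
have sign_dw := @phi_sign d dw edw.
have sign_d'w : pi (phi d') (phi dw) = switch (del_sig S sg) X' d' dw.
  by apply: phi_sign; rewrite /del_rel esym.
move: unbal; rewrite (switchC X sgC w).
by rewrite -[w]/(val dw) -!switch_del -sign_dw -sign_d'w phi_dd' addbb.
Qed.

Lemma mixed_sigE (a : Sv) (d : del_type S) :
  e (val a) (val d) -> mixed_sig a (phi d) = sgX (val a) (val d).
Proof.
move=> ead; apply/existsP/idP => [[d0 /andP [/andP [ead0 /eqP phi_d0] neg]] | neg].
  by rewrite -(neighbour_sign_eq ead0 ead phi_d0).
by exists d; rewrite /mapped_nbr ead eqxx neg.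
Qed.

Lemma ext_graph : signed_graph ext_rel ext_sig.
Proof.
case: Gsg => esym eirr sgC; case: Hpi => fsym firr piC.
by split=> [[a|i] [b|j] | [a|i] | [a|i] [b|j]] //=;
  rewrite (esym, eirr, fsym, firr, piC, switchC X sgC).
Qed.

Lemma ext_hom : signed_hom e sg ext_rel ext_sig ext_map.
Proof.
case: Gsg => esym _ sgC.
split; last exists X; move=> u v;
  case: (ext_mapP u) => [a|d] ->; case: (ext_mapP v) => [b|d'] -> /= euv.
- done.
- by apply/existsP; exists d'; rewrite /mapped_nbr euv eqxx.
- by apply/existsP; exists d; rewrite /mapped_nbr esym euv eqxx.
- exact: phi_edge.
- done.
- exact: mixed_sigE.
- by rewrite (switchC X sgC) mixed_sigE // esym.
- by rewrite phi_sign // switch_del.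
Qed.

Lemma card_ext_vertex : #|{: ext_vertex}| = #|S| + #|V|.
Proof. by rewrite card_sum card_sig; congr (_ + _); apply: eq_card. Qed.

Lemma hom_to_order_extend : hom_to_order e sg (#|S| + #|V|).
Proof. by rewrite -card_ext_vertex; apply: hom_to_order_card ext_graph ext_hom. Qed.

End ExtendHomomorphism.

Theorem theorem5p3 (T : finType) (e : rel T) (sg : T -> T -> bool)
  (S : {set T}) :
  signed_graph e sg -> s_redundant e sg S ->
  chi_s e sg <= #|S| + chi_s (del_rel S e) (del_sig S sg).
Proof.
move=> Gsg S_red; apply: chi_s_le => //.
have [f [pi [phi [Hpi [phi_edge [X' phi_sign]]]]]] :=
  chi_sP (signed_graph_del S Gsg).
by have := hom_to_order_extend Gsg S_red Hpi phi_edge phi_sign; rewrite card_ord.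
Qed.
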